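(* For every $d\ge 2$, $\mu(\mathit{BF}(d))\le 2^{d+1}-2$.
   Context: Binary strings $c=c_0\cdots c_{d-1}$ have positions $0,\dots,d-1$ from the left; $c(i)$ is $c$ with bit $i$ complemented. $\mathit{BF}(d)$ has vertex set $\{[\ell,c]:\ell\in\{0,\dots,d\},\ c\in\{0,1\}^d\}$; for $\ell\in\{0,\dots,d-1\}$, $[\ell,c]$ is adjacent to $[\ell+1,c']$ iff $c'=c$ or $c'=c(\ell)$, and there are no other edges. For a connected graph $G$ and $X\subseteq V(G)$, two vertices $x,y$ are $X$-visible if some shortest $x,y$-path has no internal vertex in $X$; $X$ is a mutual-visibility set if every two vertices of $X$ are $X$-visible; $\mu(G)$ is the maximum size of a mutual-visibility set. *)

From mathcomp Require Import all_boot.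
Set Implicit Arguments. Unset Strict Implicit. Unset Printing Implicit Defensive.

Definition walk (T : finType) (e : rel T) (x y : T) (p : seq T) : Prop :=
  path e x p /\ last x p = y.

Definition shortest_path (T : finType) (e : rel T) (x y : T) (p : seq T) : Prop :=
  walk e x y p /\ forall q, walk e x y q -> size p <= size q.

(* internal vertices of the path x :: p (all vertices but the two ends) *)
Definition internal (T : finType) (x : T) (p : seq T) : seq T := behead (belast x p).

Definition visible (T : finType) (e : rel T) (X : {set T}) (x y : T) : Prop :=
  exists p, shortest_path e x y p /\ all (fun v => v \notin X) (internal x p).

Definition mutual_visibility (T : finType) (e : rel T) (X : {set T}) : Prop :=
  forall x y, x \in X -> y \in X -> visible e X x y.

Definition bf_vertex (d : nat) : finType := ('I_d.+1 * {ffun 'I_d -> bool})%type.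

Definition flip_bit (d : nat) (c : {ffun 'I_d -> bool}) (i : nat) : {ffun 'I_d -> bool} :=
  [ffun j : 'I_d => if val j == i then ~~ c j else c j].

Definition bf_up (d : nat) (u v : bf_vertex d) : bool :=
  ((val u.1).+1 == val v.1) && ((v.2 == u.2) || (v.2 == flip_bit u.2 (val u.1))).

Definition bf_adj (d : nat) : rel (bf_vertex d) := fun u v => bf_up u v || bf_up v u.

From mathcomp Require Import all_boot zify.
From Stdlib Require Import Classical.
Set Implicit Arguments. Unset Strict Implicit. Unset Printing Implicit Defensive.

(* For a fixed mask [m], the monotone paths from [(0, a)] up to [(d, a + m)], one for each code
   [a], partition the vertices of BF(d). Each is the only shortest path between any two of its
   vertices, so a mutual-visibility set [X] meets it at most twice, and |X| <= 2^(d+1). It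
   remains to find a mask with two paths meeting [X] at most twice altogether.
   If [X] has a vertex [u] strictly between levels 0 and d, then vertices of [X] at level 0
   agreeing with [u] above its level and vertices of [X] at level d agreeing with [u] below it
   cannot both exist, since the path through such a pair passes through [u]; up to the mirror
   symmetry of BF(d) the former are missing. Descending, we reach such a vertex with no vertex
   of [X] below it agreeing with it above its level; shortest paths from it down to the lowest
   differing bit then show that suitable paths meet [X] at most once.
   If [X] lies on levels 0 and d, a missing vertex on each of them gives a path avoiding [X];
   and if level d is full, two vertices of [X] at level 0 differing only in the last bit would
   see each other only through level d. *)

(* [simpl] first, so that [lia] identifies atoms that differ only in their implicit types. *)
Local Ltac slia := simpl in *; lia.

Lemma path_mkseq (T : Type) (e : rel T) (f : nat -> T) n :
  (forall i, i < n -> e (f i) (f i.+1)) ->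
  path e (f 0) (mkseq (f \o succn) n) /\ last (f 0) (mkseq (f \o succn) n) = f n.
Proof.
elim: n => [|n IH] step //; have [pn ln] := IH (fun i lt_in => step i (ltnW lt_in)).
by rewrite mkseqS rcons_path last_rcons pn ln step.
Qed.

Lemma mem_internal (T : finType) (x : T) p i :
  0 < i < size p -> nth x (x :: p) i \in internal x p.
Proof.
case: i => [//|i]; case: p => [//|y p]; rewrite /= ltnS => ip.
have -> : internal x (y :: p) = take (size p) (y :: p).
  by rewrite /internal /=; elim: p y {ip} => //= z p IH y; rewrite IH.
by rewrite -(nth_take _ ip) mem_nth // size_take ltnSn.
Qed.

Lemma nth_cons_take (T : Type) (x : T) p i j :
  j <= i -> nth x (x :: take i p) j = nth x (x :: p) j.
Proof. by move=> ji; rewrite -[x :: take i p]/(take i.+1 (x :: p)) nth_take. Qed.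

Lemma last_take_nth (T : Type) (x : T) p i :
  i <= size p -> last x (take i p) = nth x (x :: p) i.
Proof.
by move=> ip; rewrite (last_nth x) size_takel // nth_cons_take.
Qed.

Lemma nth_cons_drop (T : Type) (x : T) p i j : i + j <= size p ->
  nth (nth x (x :: p) i) (nth x (x :: p) i :: drop i p) j = nth x (x :: p) (i + j).
Proof.
case: j => [|j] ijp; first by rewrite addn0.
by rewrite /= nth_drop addnS /=; apply: set_nth_default; rewrite -addnS.
Qed.

Lemma card_le1_ord n (S : {set 'I_n}) :
  (forall x y, x \in S -> y \in S -> x < y -> False) -> #|S| <= 1.
Proof.
move=> no2; apply/card_le1_eqP => x y xS yS; apply/val_inj.
by case: (ltngtP x y) => // [/(no2 _ _ xS yS) | /(no2 _ _ yS xS)].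
Qed.

Lemma card_le2_ord n (S : {set 'I_n}) :
  (forall x y z, x \in S -> y \in S -> z \in S -> x < y -> y < z -> False) -> #|S| <= 2.
Proof.
move=> no3; rewrite leqNgt; apply/card_gt2P => -[x [y [z [[xS yS zS] [xy yz zx]]]]].
have [nxy nyz nzx] : [/\ val x != y, val y != z & val z != x] by [].
case: (ltngtP x y) => e1; case: (ltngtP y z) => e2; case: (ltngtP z x) => e3;
  rewrite ?e1 ?e2 ?e3 ?eqxx in nxy nyz nzx => //.
all: first [ exact: no3 xS yS zS e1 e2 | exact: no3 zS yS xS e2 e1 | exact: no3 yS zS xS e2 e3
           | exact: no3 xS zS yS e3 e2 | exact: no3 zS xS yS e3 e1 | exact: no3 yS xS zS e1 e3
           | slia ].
Qed.

Lemma sum_le_double_card_sub2 (T : finType) (g : T -> nat) a1 a2 : a1 != a2 ->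
  (forall a, g a <= 2) -> g a1 + g a2 <= 2 -> \sum_a g a <= 2 * #|T| - 2.
Proof.
move=> a12 g2 g12.
have split2 (f : T -> nat) :
    \sum_a f a = f a1 + f a2 + \sum_(a | (a != a1) && (a != a2)) f a.
  rewrite (bigD1 a1) // (bigD1 a2) /= 1?eq_sym // addnA.
  by congr (_ + _ + _); apply: eq_bigl => a; rewrite andbC.
have := split2 (fun=> 2); rewrite sum_nat_const cardT -cardE.
have : \sum_(a | (a != a1) && (a != a2)) g a <= \sum_(a | (a != a1) && (a != a2)) 2.
  exact: leq_sum.
rewrite split2; lia.
Qed.

Section Geometry.
Variable d : nat.
Local Notation V := (bf_vertex d).
Local Notation code := {ffun 'I_d -> bool}.
Local Notation adj := (@bf_adj d).

Definition level (u : V) : nat := val u.1.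

Definition splice (t : nat) (lo hi : code) : code :=
  [ffun i : 'I_d => if i < t then lo i else hi i].

Definition vertex_at (t : nat) (c : code) : V := (inord t, c).

Lemma level_pair (t : 'I_d.+1) (c : code) : level (t, c) = t.
Proof. by []. Qed.

Lemma level_le (u : V) : level u <= d.
Proof. by rewrite -ltnS ltn_ord. Qed.

Lemma vertex_at_level (u : V) : vertex_at (level u) u.2 = u.
Proof. by case: u => t c; rewrite /vertex_at /level inord_val. Qed.

Lemma bf_vertex_eq (u v : V) : level u = level v -> u.2 = v.2 -> u = v.
Proof. by case: u v => [t c] [t' c'] /val_inj /= -> ->. Qed.

Lemma flip_bitE (c : code) k i : flip_bit c k i = if val i == k then ~~ c i else c i.
Proof. by rewrite ffunE. Qed.

Lemma flip_bit_self (c : code) (i : 'I_d) : flip_bit c i i = ~~ c i.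
Proof. by rewrite flip_bitE eqxx. Qed.

Lemma flip_bitK (c : code) k : flip_bit (flip_bit c k) k = c.
Proof. by apply/ffunP => i; rewrite !flip_bitE; case: eqP; rewrite ?negbK. Qed.

Lemma spliceE t lo hi i : splice t lo hi i = if i < t then lo i else hi i.
Proof. by rewrite ffunE. Qed.

Lemma splice0 (lo hi : code) : splice 0 lo hi = hi.
Proof. by apply/ffunP => i; rewrite spliceE. Qed.

Lemma splice_top (lo hi : code) : splice d lo hi = lo.
Proof. by apply/ffunP => i; rewrite spliceE ltn_ord. Qed.

Lemma splice_id t (c : code) : splice t c c = c.
Proof. by apply/ffunP => i; rewrite spliceE if_same. Qed.

Lemma bf_adj_sym : symmetric adj.
Proof. by move=> u v; rewrite /bf_adj orbC. Qed.

Lemma bf_adj_cases (u v : V) : adj u v ->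
  (level v = (level u).+1 /\ forall i : 'I_d, val i != level u -> v.2 i = u.2 i) \/
  (level u = (level v).+1 /\ forall i : 'I_d, val i != level v -> v.2 i = u.2 i).
Proof.
rewrite /bf_adj /bf_up => /orP[] /andP[/eqP lvl /orP flip]; [left | right];
  split=> // i /negbTE ni; by case: flip => /eqP ->; rewrite ?flip_bitE ?ni.
Qed.

Lemma bf_adj_vertex_at t (c c' : code) : t < d -> c' = c \/ c' = flip_bit c t ->
  adj (vertex_at t c) (vertex_at t.+1 c').
Proof.
move=> ht hc; apply/orP; left; rewrite /bf_up /vertex_at /= !inordK ?eqxx //=; last slia.
by case: hc => ->; rewrite eqxx ?orbT.
Qed.

Lemma level_path (u : V) p : path adj u p ->
  level (last u p) <= level u + size p /\ level u <= level (last u p) + size p.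
Proof.
elim: p u => [|v p IH] u /=; first by rewrite !addn0.
case/andP => /bf_adj_cases uv /IH [l1 l2]; case: uv => -[lv _]; split; slia.
Qed.

Lemma ascending_path (u : V) p : path adj u p -> level (last u p) = level u + size p ->
  forall i, i <= size p -> level (nth u (u :: p) i) = level u + i /\
    (nth u (u :: p) i).2 = splice (level u + i) (last u p).2 u.2.
Proof.
elim: p u => [|v p IH] u /=.
  by move=> _ _ i; rewrite leqn0 => /eqP ->; rewrite /= addn0 splice_id.
case/andP => uv vp hsz; have [lp _] := level_path vp.
have [lv cv] : level v = (level u).+1 /\ forall i : 'I_d, val i != level u -> v.2 i = u.2 i.
  by case: (bf_adj_cases uv) => // -[lu _]; slia.
have {}IH := IH _ vp ltac:(slia).
case=> [|i] hi; last first.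
  rewrite /= (set_nth_default v) //; have [-> ->] := IH i hi; split; first slia.
  apply/ffunP => j; rewrite !spliceE lv addSnnS; case: ifP => // hj.
  by rewrite cv //; apply: contraFneq hj => ->; rewrite addnS ltnS leq_addr.
split; first by rewrite addn0.
apply/ffunP => j; rewrite spliceE addn0; case: ifP => // hj.
have [_ /(congr1 (fun f : code => f j))] := IH 0 (leq0n _).
rewrite /= spliceE addn0 lv ltnS ltnW // => <-.
by rewrite cv //; apply: contraTneq hj => ->; rewrite ltnn.
Qed.

Lemma descending_path (u : V) p : path adj u p -> level u = level (last u p) + size p ->
  forall i, i <= size p -> level (nth u (u :: p) i) + i = level u /\
    (nth u (u :: p) i).2 = splice (level u - i) u.2 (last u p).2.
Proof.
elim: p u => [|v p IH] u /=.
  move=> _ _ i; rewrite leqn0 => /eqP ->; rewrite addn0 subn0; split=> //.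
  by apply/ffunP => j; rewrite spliceE; case: ifP.
case/andP => uv vp hsz; have [_ lp] := level_path vp.
have [lu cv] : level u = (level v).+1 /\ forall i : 'I_d, val i != level v -> v.2 i = u.2 i.
  by case: (bf_adj_cases uv) => // -[lv _]; slia.
have {}IH := IH _ vp ltac:(slia).
case=> [|i] hi; last first.
  rewrite /= (set_nth_default v) //; have [li ->] := IH i hi; split; first slia.
  apply/ffunP => j; rewrite !spliceE lu subSS; case: ifP => // hj.
  by rewrite cv //; apply: contraTneq hj => ->; rewrite ltnNge leq_subr.
split; first by rewrite addn0.
apply/ffunP => j; rewrite spliceE subn0; case: ifP => // hj.
have [_ /(congr1 (fun f : code => f j))] := IH 0 (leq0n _).
rewrite /= spliceE subn0 ifF => [<-|]; last slia.
by rewrite cv //; apply: contraFneq hj => ->; rewrite lu.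
Qed.

(* Only an edge between levels [b] and [b + 1] can change bit [b]. *)
Lemma path_flips_bit (u : V) p (b : 'I_d) : path adj u p -> u.2 b != (last u p).2 b ->
  (exists2 i, i <= size p & level (nth u (u :: p) i) = b) /\
  (exists2 i, i <= size p & level (nth u (u :: p) i) = b.+1).
Proof.
elim: p u => [|v p IH] u /=; first by rewrite eqxx.
case/andP => uv vp hb.
have [uvb | nuvb] := eqVneq (u.2 b) (v.2 b).
  have [[i hi li] [j hj lj]] := IH _ vp ltac:(by rewrite -uvb).
  by split; [exists i.+1 | exists j.+1]; rewrite //= (set_nth_default v).
case: (bf_adj_cases uv) => -[lvl cv].
- have lb : val b = level u by apply/eqP; apply: contraR nuvb => /cv ->.
  by split; [exists 0 | exists 1]; rewrite //= ?lvl lb.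
- have lb : val b = level v by apply/eqP; apply: contraR nuvb => /cv ->.
  by split; [exists 1 | exists 0]; rewrite //= ?lvl lb.
Qed.

Lemma splice_step (w c : code) t : t < d ->
  splice t.+1 w c = splice t w c \/ splice t.+1 w c = flip_bit (splice t w c) t.
Proof.
move=> ht; set o := Ordinal ht.
have at_t (i : 'I_d) : val i = t -> i = o by move=> it; apply: val_inj.
have [wc | wc] := eqVneq (w o) (c o); [left | right]; apply/ffunP => i;
  rewrite ?flip_bitE !spliceE ltnS leq_eqVlt;
  have [/at_t -> | nit] /= := eqVneq (val i) t; rewrite ?eqxx ?ltnn //=.
by move: wc; case: (w o); case: (c o).
Qed.

(* Descend from [u] to level [k], then ascend to [w], correcting bits [k <= i < level w]. *)
Lemma valley_walk (u w : V) k : k <= level u -> k <= level w ->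
  (forall i : 'I_d, i < k -> w.2 i = u.2 i) ->
  (forall i : 'I_d, level w <= i -> w.2 i = u.2 i) ->
  exists q, [/\ path adj u q, last u q = w & size q = (level u - k) + (level w - k)].
Proof.
move=> ku kw low high; have ud := level_le u; have wd := level_le w.
pose down i := vertex_at (level u - i) u.2.
pose up i := vertex_at (k + i) (splice (k + i) w.2 u.2).
have [pd ld] : path adj (down 0) (mkseq (down \o succn) (level u - k)) /\
    last (down 0) (mkseq (down \o succn) (level u - k)) = down (level u - k).
  apply: path_mkseq => i lt_i; rewrite bf_adj_sym /down.
  have -> : level u - i = (level u - i.+1).+1 by slia.
  by apply: bf_adj_vertex_at; [slia | left].
have [pu lu] : path adj (up 0) (mkseq (up \o succn) (level w - k)) /\
    last (up 0) (mkseq (up \o succn) (level w - k)) = up (level w - k).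
  apply: path_mkseq => i lt_i; rewrite /up addnS.
  by apply: bf_adj_vertex_at; [slia | apply: splice_step; slia].
have down0 : down 0 = u by rewrite /down subn0 vertex_at_level.
have up0 : up 0 = down (level u - k).
  rewrite /up /down addn0 subKn //; congr vertex_at.
  by apply/ffunP => i; rewrite spliceE; case: ifP => // /low.
have upn : up (level w - k) = w.
  rewrite /up subnKC // -[RHS]vertex_at_level; congr vertex_at.
  by apply/ffunP => i; rewrite spliceE; case: ltnP => // /high.
rewrite down0 in pd ld; rewrite up0 -ld upn in pu lu.
exists (mkseq (down \o succn) (level u - k) ++ mkseq (up \o succn) (level w - k)).
by rewrite cat_path last_cat pd pu lu size_cat !size_mkseq.
Qed.

(* A path through level [k] that is no longer than the valley walk of [valley_walk] is a valley
   walk: it descends monotonically to level [k] and then ascends monotonically. *)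
Lemma valley_path (u : V) p k i : path adj u p -> i <= size p ->
  level (nth u (u :: p) i) = k -> k <= level u -> k <= level (last u p) ->
  size p <= (level u - k) + (level (last u p) - k) ->
  let z := (nth u (u :: p) i).2 in
  [/\ i = level u - k, size p = (level u - k) + (level (last u p) - k),
   forall j : 'I_d, level u <= j -> z j = u.2 j,
   forall j, j <= i -> level (nth u (u :: p) j) + j = level u /\
     (nth u (u :: p) j).2 = splice (level u - j) u.2 z &
   forall j, i + j <= size p -> level (nth u (u :: p) (i + j)) = k + j /\
     (nth u (u :: p) (i + j)).2 = splice (k + j) (last u p).2 z].
Proof.
move=> up ip lk ku kw short z.
have /andP[pl pr] : path adj u (take i p) && path adj (nth u (u :: p) i) (drop i p).
  by rewrite -last_take_nth // -cat_path cat_take_drop.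
have lr : last (nth u (u :: p) i) (drop i p) = last u p.
  by rewrite -last_take_nth // -last_cat cat_take_drop.
have sl : size (take i p) = i by rewrite size_takel.
have sr : size (drop i p) = size p - i by rewrite size_drop.
have [_ dl] := level_path pl; rewrite last_take_nth // sl lk in dl.
have [dr _] := level_path pr; rewrite lr sr lk in dr.
have ei : i = level u - k by slia.
have down j : j <= i -> level (nth u (u :: p) j) + j = level u /\
    (nth u (u :: p) j).2 = splice (level u - j) u.2 z.
  move=> ji; have := descending_path pl; rewrite sl last_take_nth // lk => /(_ ltac:(slia) j ji).
  by rewrite !nth_cons_take.
split=> // [|j uj|j ijp]; first by slia.
- have [_ /(congr1 (fun c : code => c j))] := down 0 (leq0n _).
  by rewrite /= spliceE subn0 ltnNge uj.
- have := ascending_path pr; rewrite sr lr lk => /(_ ltac:(slia) j ltac:(slia)).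
  by rewrite nth_cons_drop.
Qed.

End Geometry.

Section Families.
Variable d : nat.
Local Notation V := (bf_vertex d).
Local Notation code := {ffun 'I_d -> bool}.

Definition xorc (a m : code) : code := [ffun i => a i (+) m i].

(* [fam m a] is the monotone path from [(0, a)] up to [(d, a + m)]. *)
Definition fam (m a : code) (t : 'I_d.+1) : V := (t, splice t (xorc a m) a).

Definition fam_count (X : {set V}) m a := #|[set t | fam m a t \in X]|.

Lemma level_fam m a t : level (fam m a t) = t.
Proof. by []. Qed.

Lemma card_fam_partition (X : {set V}) m : #|X| = \sum_a fam_count X m a.
Proof.
pose F (v : V) : V := fam m v.2 v.1.
have FK : involutive F.
  move=> [t a]; rewrite /F /fam /=; congr pair; apply/ffunP => i.
  by rewrite !spliceE !ffunE; case: ifP => // ->; case: (a i); case: (m i).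
have card_pred (I : finType) (P : pred I) : #|[set x | P x]| = \sum_x (P x : nat).
  by rewrite -sum1_card big_mkcond; apply: eq_bigr => x _; rewrite inE; case: (P x).
transitivity (\sum_a \sum_t (fam m a t \in X : nat)); last first.
  by apply: eq_bigr => a _; rewrite /fam_count card_pred.
rewrite -(card_preimset X (inv_inj FK)) /preimset card_pred exchange_big pair_big /=.
by apply: eq_bigr => -[t a].
Qed.

End Families.

Section Visibility.
Variable d : nat.
Local Notation V := (bf_vertex d).
Local Notation adj := (@bf_adj d).
Variable X : {set V}.
Hypothesis visX : mutual_visibility adj X.

Lemma visible_path x y : x \in X -> y \in X -> exists p,
  [/\ path adj x p, last x p = y,
      (forall q, path adj x q -> last x q = y -> size p <= size q) &
      (forall i, 0 < i < size p -> nth x (x :: p) i \notin X)].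
Proof.
move=> xX yX; have [p [[[xp py] short] notX]] := visX xX yX.
exists p; split=> // [q xq qy|i ip]; first exact: short.
by apply: (allP notX); apply: mem_internal.
Qed.

(* The family path is the only shortest path from [fam m a t1] to [fam m a t3]. *)
Lemma fam_no_three m a (t1 t2 t3 : 'I_d.+1) : t1 < t2 -> t2 < t3 ->
  fam m a t1 \in X -> fam m a t3 \in X -> fam m a t2 \notin X.
Proof.
move=> t12 t23 x1 x3; have t13 := ltn_trans t12 t23.
have [p [xp px short notX]] := visible_path x1 x3.
have [q [xq qx]] : exists q, [/\ path adj (fam m a t1) q, last (fam m a t1) q = fam m a t3
    & size q = (level (fam m a t1) - t1) + (level (fam m a t3) - t1)].
  apply: valley_walk => [||i lt_i|i le_i]; rewrite ?level_fam ?(ltnW t13) // !spliceE.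
  - by rewrite lt_i (ltn_trans lt_i t13).
  - by rewrite !ltnNge le_i (leq_trans (ltnW t13) le_i).
rewrite !level_fam subnn add0n => sq.
have short_p : size p <= t3 - t1 by rewrite -sq short.
have := valley_path xp (leq0n _) (erefl _) (leqnn _); rewrite px /= !level_fam subnn add0n.
case/(_ (ltnW t13) short_p) => _ sp _ _ up.
have [l2 c2] := up (t2 - t1) ltac:(slia).
have <- : nth (fam m a t1) (fam m a t1 :: p) (0 + (t2 - t1)) = fam m a t2.
  apply: bf_vertex_eq; first by rewrite l2 level_fam; slia.
  rewrite c2 subnKC ?(ltnW t12) //; apply/ffunP => i; rewrite !spliceE.
  case: (ltnP i t2) => [i2 | /(leq_trans (ltnW t12))/leq_gtF -> //].
  by rewrite (ltn_trans i2 t23).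
by apply: notX; slia.
Qed.

Lemma fam_count_le2 m a : fam_count X m a <= 2.
Proof.
apply: card_le2_ord => t1 t2 t3; rewrite !inE => x1 x2 x3 t12 t23.
by move: (fam_no_three t12 t23 x1 x3); rewrite x2.
Qed.

End Visibility.

Section Deficient.
Variable d : nat.
Local Notation V := (bf_vertex d).
Local Notation code := {ffun 'I_d -> bool}.
Local Notation adj := (@bf_adj d).

Definition same_above (l : nat) (a c : code) := forall i : 'I_d, l <= i -> a i = c i.

Definition deficient (X : {set V}) :=
  exists m a1 a2, a1 != a2 /\ fam_count X m a1 + fam_count X m a2 <= 2.

Lemma card_le_of_deficient (X : {set V}) : mutual_visibility adj X -> deficient X ->
  #|X| <= 2 ^ d.+1 - 2.
Proof.
move=> visX [m [a1 [a2 [a12 count12]]]].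
have card_code : #|{: code}| = 2 ^ d by rewrite card_ffun card_bool card_ord.
rewrite (card_fam_partition X m) expnS -card_code.
exact: sum_le_double_card_sub2 a12 (fam_count_le2 visX m) count12.
Qed.

Lemma xorcK (s c : code) : xorc s (xorc s c) = c.
Proof. by apply/ffunP => i; rewrite !ffunE addKb. Qed.

Lemma fam_xorc (s c : code) t : fam (xorc s c) s t = (t, splice t c s).
Proof. by rewrite /fam xorcK. Qed.

Variable X : {set V}.
Hypothesis visX : mutual_visibility adj X.

(* A shortest path from [u] to [fam m a t2] must go down to level [k] and then climb along the
   family path, through [fam m a t1]. *)
Lemma fam_pair_above (u : V) m a (k : 'I_d) (t1 t2 : 'I_d.+1) : u \in X ->
  same_above (level u) a u.2 -> k < level u -> xorc a m k != u.2 k ->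
  (forall i : 'I_d, i < k -> xorc a m i = u.2 i) -> level u <= t1 -> t1 < t2 ->
  fam m a t1 \in X -> fam m a t2 \notin X.
Proof.
move=> uX au ku km below ut1 t12 x1; apply/negP => x2.
have [p [up py short notX]] := visible_path visX uX x2.
have [q [uq qy]] : exists q, [/\ path adj u q, last u q = fam m a t2
    & size q = (level u - k) + (level (fam m a t2) - k)].
  apply: valley_walk; rewrite ?level_fam; try slia.
  - by move=> i ik; rewrite spliceE ifT ?below //; slia.
  - by move=> i t2i; rewrite spliceE (leq_gtF t2i) au //; slia.
move=> sq; have short_p := short _ uq qy; rewrite sq in short_p.
have flip : u.2 k != (last u p).2 k by rewrite py spliceE ifT 1?eq_sym //; slia.
have [[i ip lk] _] := path_flips_bit up flip.
have := valley_path up ip lk; rewrite py level_fam.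
case/(_ (ltnW ku) ltac:(slia) short_p) => ei sp zu _ asc.
have [l1 c1] := asc (t1 - k) ltac:(slia).
have on_path : nth u (u :: p) (i + (t1 - k)) = fam m a t1.
  apply: bf_vertex_eq; first by rewrite l1 level_fam; slia.
  rewrite c1 subnKC; last by slia.
  apply/ffunP => j; rewrite !spliceE; case: ltnP => j1; first by rewrite ifT //; slia.
  by rewrite zu ?au //; slia.
have internal1 : 0 < i + (t1 - k) < size p by slia.
by move: (notX _ internal1); rewrite on_path x1.
Qed.

Definition below_free (u : V) := forall (t : 'I_d.+1) z,
  t < level u -> same_above (level u) z u.2 -> (t, z) \notin X.

Lemma fam_count_le1_of_below_free (u : V) m a : u \in X -> below_free u ->
  same_above (level u) a u.2 -> (exists i : 'I_d, (i < level u) && (xorc a m i != u.2 i)) ->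
  fam_count X m a <= 1.
Proof.
move=> uX free au [i0 /andP[i0u i0m]].
pose k := [arg min_(i < i0 | (i < level u) && (xorc a m i != u.2 i)) (i : nat)].
have [/andP[ku km] kmin] : ((k < level u) && (xorc a m k != u.2 k)) /\
    forall i : 'I_d, (i < level u) && (xorc a m i != u.2 i) -> k <= i.
  by rewrite /k; case: arg_minnP; [rewrite i0u | move=> j ? ?; split].
have below (i : 'I_d) : i < k -> xorc a m i = u.2 i.
  move=> ik; have iu := ltn_trans ik ku.
  by apply/eqP; apply: contraTT ik => im; rewrite -leqNgt kmin // iu.
apply: card_le1_ord => t1 t2; rewrite !inE => x1 x2 t12.
have ut1 : level u <= t1.
  rewrite leqNgt; apply/negP => t1u; move: x1; apply/negP; apply: free => // i ui.
  by rewrite spliceE ifF ?au //; slia.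
by move: x2; apply/negP; apply: fam_pair_above uX au ku km below ut1 t12 x1.
Qed.

Definition zero_code : code := [ffun=> false].

Lemma xorc0 (a : code) : xorc a zero_code = a.
Proof. by apply/ffunP => i; rewrite !ffunE addbF. Qed.

Lemma fam0 (a : code) t : fam zero_code a t = (t, a).
Proof. by rewrite /fam xorc0 splice_id. Qed.

Lemma flip_bit_same_above l k (c : code) : k < l -> same_above l (flip_bit c k) c.
Proof.
by move=> kl i li; rewrite flip_bitE ifF //; apply: contraTF li => /eqP ->; rewrite -ltnNge.
Qed.

Lemma flip_bit_neq (c : code) (i : 'I_d) : flip_bit c i != c.
Proof. by apply/eqP => /ffunP/(_ i); rewrite flip_bit_self; case: (c i). Qed.

Lemma column_le1 (u : V) (b : 'I_d) : u \in X -> below_free u -> b < level u ->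
  fam_count X zero_code (flip_bit u.2 b) <= 1.
Proof.
move=> uX free bu; apply: (fam_count_le1_of_below_free uX free).
  exact: flip_bit_same_above.
by exists b; rewrite bu xorc0 flip_bit_self; case: (u.2 b).
Qed.

Lemma deficient_of_level_ge2 (u : V) : u \in X -> below_free u -> 1 < level u ->
  deficient X.
Proof.
move=> uX free lu; have d2 : 1 < d := leq_trans lu (level_le u).
pose b0 : 'I_d := Ordinal (ltnW d2); pose b1 : 'I_d := Ordinal d2.
exists zero_code, (flip_bit u.2 b0), (flip_bit u.2 b1); split.
  by apply/eqP => /ffunP/(_ b0); rewrite flip_bit_self flip_bitE /=; case: (u.2 b0).
have := column_le1 uX free (ltnW lu : b0 < level u).
have := column_le1 uX free (lu : b1 < level u); lia.
Qed.

(* A shortest path from [y] to [w] that must change bit [0] descends from [y] to level [0]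
   along the family path through [y] of its bottom code [s]; that family meets [X] only in [y]. *)
Lemma fam_count_le1_of_valley (y w : V) (b : 'I_d) : y \in X -> w \in X -> val b = 0 ->
  y.2 b != w.2 b -> 0 < level w -> same_above (level w) w.2 y.2 ->
  (forall t : 'I_d.+1, level y < t -> (t, y.2) \notin X) ->
  exists s, fam_count X (xorc s y.2) s <= 1.
Proof.
move=> yX wX b0 yw w0 wy top.
have [p [yp pw short notX]] := visible_path visX yX wX.
have [q [yq qw]] := @valley_walk _ y w 0 (leq0n _) (leq0n _) (fun i => ltac:(by [])) wy.
rewrite !subn0 => sq; have short_p := short _ yq qw; rewrite sq in short_p.
have [[i ip li] _] := path_flips_bit yp (b := b) ltac:(by rewrite pw).
rewrite b0 in li; have := valley_path yp ip li (leq0n _) (leq0n _); rewrite pw !subn0.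
case/(_ short_p) => ei sp sy desc _; exists (nth y (y :: p) i).2.
apply: card_le1_ord => t1 t2; rewrite !inE !fam_xorc => x1 x2 t12.
have [t1y | yt1] := ltnP t1 (level y).
  have [l1 c1] := desc (level y - t1) ltac:(slia).
  have on_path : nth y (y :: p) (level y - t1) = (t1, splice t1 y.2 (nth y (y :: p) i).2).
    by apply: bf_vertex_eq; [rewrite level_pair; slia | rewrite c1 subKn //; slia].
  have internal1 : 0 < level y - t1 < size p by slia.
  by move: (notX _ internal1); rewrite on_path x1.
have : splice t2 y.2 (nth y (y :: p) i).2 = y.2.
  by apply/ffunP => j; rewrite spliceE; case: ltnP => // j2; rewrite sy //; slia.
by move=> e; move: x2; rewrite e; apply/negP; apply: top; slia.
Qed.

(* The column of [c'] meets [X] at most once. If it meets it at all, join the highest vertex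
   of [X] in the column of [c] to it: the bottom code [s] of this valley gives a second family
   meeting [X] at most once, and so does the column of whichever of [c], [c'] differs from [s]
   at bit [0]. *)
Lemma deficient_of_level1 (u : V) : u \in X -> below_free u -> level u = 1 -> 1 < d ->
  deficient X.
Proof.
move=> uX free lu d2; pose b0 : 'I_d := Ordinal (ltnW d2).
set c := u.2; set c' := flip_bit c b0.
have c'c : same_above 1 c' c by apply: flip_bit_same_above.
have col' : fam_count X zero_code c' <= 1 by apply: column_le1; rewrite ?lu.
have [empty' | /card_gt0P [t']] := posnP (fam_count X zero_code c').
  exists zero_code, c, c'; split; first by rewrite eq_sym flip_bit_neq.
  by rewrite empty' addn0 fam_count_le2.
rewrite inE fam0 => x'.
have t'0 : 0 < t'.
  rewrite lt0n; apply: contraTneq x' => t'0; apply: free; rewrite ?lu ?t'0 //.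
pose j := [arg max_(t > u.1 | (t, c) \in X) (t : nat)].
have [jX jmax] : (j, c) \in X /\ forall t, (t, c) \in X -> t <= j.
  by rewrite /j; case: arg_maxnP => [|t tX tmax]; [rewrite /c -surjective_pairing | ].
have cc' : c b0 != c' b0 by rewrite flip_bit_self; case: (c b0).
have top (t : 'I_d.+1) : j < t -> (t, c) \notin X by apply: contraTN => /jmax; rewrite -leqNgt.
have [s col_s] := @fam_count_le1_of_valley (j, c) (t', c') b0 jX x' erefl cc' t'0
  (fun i ti => c'c i (leq_trans t'0 ti)) top.
pose a := if s b0 == c b0 then c' else c.
have sa : s b0 != a b0.
  by rewrite /a; case: ifP => [/eqP -> | /negbT sc //]; rewrite flip_bit_self; case: (c b0).
have col_a : fam_count X (xorc s c) a <= 1.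
  apply: (fam_count_le1_of_below_free uX free).
    by rewrite lu /a; case: ifP => // _ i; apply: c'c.
  exists b0; rewrite lu /= !ffunE; move: sa; rewrite /a.
  by case: ifP; rewrite ?flip_bit_self; case: (s b0); case: (c b0).
exists (xorc s c), s, a; split; last slia.
by apply: contraNneq sa => ->.
Qed.

Definition low_free (u : V) :=
  forall a, same_above (level u) a u.2 -> (ord0, a) \notin X.

Definition high_free (u : V) :=
  forall b : code, (forall i : 'I_d, i < level u -> b i = u.2 i) -> (ord_max, b) \notin X.

(* Otherwise the family path from some [(0, a)] in [X] to some [(d, b)] in [X] passes
   through [u]. *)
Lemma low_or_high_free (u : V) : u \in X -> 0 < level u < d -> low_free u \/ high_free u.
Proof.
move=> uX /andP[u0 ud]; case: (classic (low_free u)) => [|not_low]; [by left | right].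
move=> b bu; apply/negP => bX; apply: not_low => a au; apply/negP => aX.
have := fam_no_three visX (m := xorc a b) (a := a) (t1 := ord0) (t2 := u.1) (t3 := ord_max) u0 ud.
rewrite !fam_xorc [in (ord0, _)]splice0 [in (ord_max, _)]splice_top.
have -> : splice u.1 b a = u.2.
  by apply/ffunP => i; rewrite spliceE; case: ltnP => [/bu | /au].
by rewrite -surjective_pairing uX => /(_ aX bX).
Qed.

Lemma exists_below_free (u : V) : u \in X -> 0 < level u -> low_free u ->
  exists2 w, w \in X & [/\ 0 < level w, level w <= level u & below_free w].
Proof.
move: {2}(level u) (leqnn (level u)) => n; elim: n u => [|n IH] u un uX u0 low.
  by move: u0; rewrite leqNgt (leq_ltn_trans un).
case: (classic (below_free u)) => [free | not_free]; first by exists u.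
have [t [z [tu zu tz]]] : exists (t : 'I_d.+1) z,
    [/\ t < level u, same_above (level u) z u.2 & (t, z) \in X].
  apply: NNPP => none; apply: not_free => t z tu zu; apply/negP => tz.
  by apply: none; exists t, z.
have t0 : 0 < t.
  rewrite lt0n; apply: contraTneq tz => t0.
  have -> : t = ord0 by exact: val_inj.
  exact: low zu.
have lowtz : low_free (t, z).
  by move=> a az; apply: low => i ui; rewrite az /= ?zu // level_pair; slia.
have [w wX [w0 wt wfree]] := IH (t, z) ltac:(by rewrite level_pair; slia) tz t0 lowtz.
by exists w => //; split=> //; rewrite level_pair in wt; slia.
Qed.

Lemma deficient_of_mid_low_free (u : V) : u \in X -> 0 < level u < d -> low_free u ->
  deficient X.
Proof.
move=> uX /andP[u0 ud] low; have [w wX [w0 wu free]] := exists_below_free uX u0 low.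
have [w1 | w2] := leqP (level w) 1; last exact: deficient_of_level_ge2 wX free w2.
by apply: deficient_of_level1 wX free _ _; slia.
Qed.

Definition on_ends := forall z, z \in X -> level z = 0 \/ level z = d.

Lemma deficient_of_ends_gaps a b : on_ends -> (ord0, a) \notin X -> (ord_max, b) \notin X ->
  0 < d -> deficient X.
Proof.
move=> ends aX bX d0; pose b0 : 'I_d := Ordinal d0.
exists (xorc a b), a, (flip_bit a b0); split; first by rewrite eq_sym flip_bit_neq.
suff -> : fam_count X (xorc a b) a = 0 by rewrite fam_count_le2.
apply/eqP; rewrite cards_eq0; apply/eqP/setP => t; rewrite !inE fam_xorc.
apply/negP => tX; case: (ends _ tX); rewrite level_pair => tl; move: tX.
- by rewrite (_ : t = ord0) ?splice0 ?(negbTE aX) //; apply: val_inj.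
- by rewrite (_ : t = ord_max) ?splice_top ?(negbTE bX) //; apply: val_inj.
Qed.

(* A shortest path between [(0, a)] and [(0, a(d-1))] must climb to level [d]. *)
Lemma level0_pair_blocked a : (forall b, (ord_max, b) \in X) -> 0 < d ->
  (ord0, a) \in X -> (ord0, flip_bit a d.-1) \notin X.
Proof.
move=> topX d0 aX; apply/negP => a'X.
have [p [ap pa' _ notX]] := visible_path visX aX a'X.
have dd : d.-1 < d by rewrite ltn_predL.
pose bd : 'I_d := Ordinal dd.
have flip : a bd != (last (ord0, a) p).2 bd by rewrite pa' /= flip_bitE eqxx; case: (a bd).
have [_ [i ip]] := path_flips_bit ap flip; rewrite /bd /= prednK // => li.
have on_top : nth (ord0, a) ((ord0, a) :: p) i = (ord_max, (nth (ord0, a) ((ord0, a) :: p) i).2).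
  exact: bf_vertex_eq.
have internal_i : 0 < i < size p.
  rewrite lt0n ltn_neqAle ip andbT; apply/andP; split; apply/eqP => ei; move: li; rewrite ei.
    by rewrite /= level_pair /=; lia.
  by rewrite -last_nth pa' level_pair /=; lia.
by move: (notX _ internal_i); rewrite on_top topX.
Qed.

Lemma deficient_of_top_full : on_ends -> (forall b, (ord_max, b) \in X) -> 1 < d ->
  deficient X.
Proof.
move=> ends topX d2; pose b0 : 'I_d := Ordinal (ltnW d2).
have pick (c : code) : exists2 c' : code, c' b0 = c b0 & (ord0, c') \notin X.
  have [cX | ] := boolP ((ord0, c) \in X); last by exists c.
  exists (flip_bit c d.-1); last exact: level0_pair_blocked topX (ltnW d2) cX.
  by rewrite flip_bitE ifF //=; lia.
have col (c : code) : (ord0, c) \notin X -> fam_count X zero_code c <= 1.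
  move=> cX; apply: card_le1_ord => t1 t2; rewrite !inE !fam0 => x1 _ t12.
  case: (ends _ x1); rewrite level_pair => t1l; last by move: (ltn_ord t2); lia.
  by move: x1; rewrite (_ : t1 = ord0) ?(negbTE cX) //; apply: val_inj.
have [c1 c1b c1X] := pick zero_code; have [c2 c2b c2X] := pick (flip_bit zero_code b0).
exists zero_code, c1, c2; split; last by have := col _ c1X; have := col _ c2X; lia.
by apply/eqP => c12; move: c2b; rewrite -c12 c1b flip_bit_self !ffunE.
Qed.

End Deficient.

Section Mirror.
Variable d : nat.
Local Notation V := (bf_vertex d).
Local Notation code := {ffun 'I_d -> bool}.
Local Notation adj := (@bf_adj d).

(* The automorphism [[l, c]] |-> [[d - l, reversed c]] of BF(d), exchanging levels [0] and [d]. *)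
Definition mirror_code (c : code) : code := [ffun i => c (rev_ord i)].
Definition mirror (u : V) : V := (rev_ord u.1, mirror_code u.2).

Lemma mirror_codeK : involutive mirror_code.
Proof. by move=> c; apply/ffunP => i; rewrite !ffunE rev_ordK. Qed.

Lemma mirrorK : involutive mirror.
Proof. by case=> t c; rewrite /mirror /= rev_ordK mirror_codeK. Qed.

Lemma mirror_inj : injective mirror.
Proof. exact: inv_inj mirrorK. Qed.

Lemma level_mirror u : level (mirror u) = d - level u.
Proof. by rewrite /level /= subSS. Qed.

Lemma mirror_flip_bit (c : code) k : k < d ->
  mirror_code (flip_bit c k) = flip_bit (mirror_code c) (d.-1 - k).
Proof.
move=> kd; apply/ffunP => i; rewrite !ffunE /=; congr (if _ then _ else _).
by have := ltn_ord i; rewrite -subn1 => id; apply/eqP/eqP; slia.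
Qed.

Lemma bf_up_mirror (u v : V) : bf_up (mirror u) (mirror v) = bf_up v u.
Proof.
rewrite /bf_up /= !subSS; have ud := ltn_ord u.1; have vd := ltn_ord v.1.
have [vu | vu] /= := eqVneq (val v.1).+1 (val u.1); last first.
  by apply/negbTE; apply: contra vu => /eqP vu; apply/eqP; slia.
have -> : (d - u.1).+1 == d - v.1 by apply/eqP; slia.
rewrite (_ : d - u.1 = d.-1 - v.1); last by slia.
rewrite -mirror_flip_bit; last by slia.
rewrite !(inj_eq (inv_inj mirror_codeK)) eq_sym.
by congr (_ || _); apply/eqP/eqP => ->; rewrite flip_bitK.
Qed.

Lemma bf_adj_mirror (u v : V) : adj (mirror u) (mirror v) = adj u v.
Proof. by rewrite /bf_adj !bf_up_mirror orbC. Qed.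

Lemma mutual_visibility_mirror (X : {set V}) :
  mutual_visibility adj X -> mutual_visibility adj (mirror @: X).
Proof.
move=> visX _ _ /imsetP[x xX ->] /imsetP[y yX ->].
have [p [[[xp py] short] notX]] := visX x y xX yX.
have adjE : relpre mirror adj =2 adj by move=> u v; rewrite /relpre /= bf_adj_mirror.
exists (map mirror p); split; first split; first split.
- by rewrite path_map (eq_path adjE).
- by rewrite last_map py.
- move=> q [mq qy]; rewrite size_map -(size_map mirror q); apply: short; split.
  + by rewrite -[x]mirrorK path_map (eq_path adjE).
  + by rewrite -[x]mirrorK last_map qy mirrorK.
- rewrite /internal belast_map behead_map all_map.
  by apply/allP => z zp /=; rewrite (mem_imset _ _ mirror_inj); apply: (allP notX).
Qed.

Lemma low_free_mirror (X : {set V}) u : high_free X u -> low_free (mirror @: X) (mirror u).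
Proof.
move=> high a au.
have -> : (ord0, a) = mirror (ord_max, mirror_code a).
  by rewrite /mirror /= mirror_codeK; congr pair; apply: val_inj; rewrite /=; lia.
rewrite (mem_imset _ _ mirror_inj); apply: high => i iu.
rewrite ffunE au /=; first by rewrite ffunE rev_ordK.
by rewrite level_mirror; have := level_le u; slia.
Qed.

Lemma on_ends_mirror (X : {set V}) : on_ends X -> on_ends (mirror @: X).
Proof.
move=> ends _ /imsetP[u uX ->]; rewrite level_mirror.
by case: (ends u uX) => ->; [right; rewrite subn0 | left; rewrite subnn].
Qed.

Lemma top_full_mirror (X : {set V}) :
  (forall a, (ord0, a) \in X) -> forall b, (ord_max, b) \in mirror @: X.
Proof.
move=> bottom b; have -> : (ord_max, b) = mirror (ord0, mirror_code b).
  by rewrite /mirror /= mirror_codeK; congr pair; apply: val_inj; rewrite /=; lia.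
exact: imset_f.
Qed.

End Mirror.

Arguments mirror {d} u.

Lemma deficient_or_mirror d (X : {set bf_vertex d}) : 1 < d ->
  mutual_visibility (@bf_adj d) X -> deficient X \/ deficient (mirror @: X).
Proof.
move=> d2 visX; have visM := mutual_visibility_mirror visX.
case: (pickP [pred u | (u \in X) && (0 < level u < d)]) => [u /andP[uX umid] | no_mid].
  have [low | high] := low_or_high_free visX uX umid; [left | right].
    exact: (deficient_of_mid_low_free visX uX umid low).
  have mid : 0 < level (mirror u) < d.
    by rewrite level_mirror; have := level_le u; case/andP: umid; lia.
  exact: (deficient_of_mid_low_free visM (imset_f mirror uX) mid (low_free_mirror high)).
have ends : on_ends X.
  move=> z zX; have := no_mid z; rewrite /= zX /= => /negbT.
  case: (posnP (level z)) => [-> | _]; first by left.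
  by rewrite /= -leqNgt => dz; right; apply/eqP; rewrite eqn_leq dz level_le.
case: (pickP [pred b | (ord_max, b) \notin X]) => [b /= bX | top_full]; last first.
  by left; apply: deficient_of_top_full visX ends _ d2 => b; apply/negbFE/top_full.
case: (pickP [pred a | (ord0, a) \notin X]) => [a /= aX | bottom_full].
  by left; exact: (deficient_of_ends_gaps visX ends aX bX (ltnW d2)).
right; apply: deficient_of_top_full visM (on_ends_mirror ends) (top_full_mirror _) d2.
by move=> a; apply/negbFE/bottom_full.
Qed.

Theorem lemma5p3 (d : nat) (hd : 2 <= d) (X : {set bf_vertex d}) :
  mutual_visibility (@bf_adj d) X -> #|X| <= 2 ^ d.+1 - 2.
Proof.
move=> visX; have [defX | defM] := deficient_or_mirror hd visX.
  exact: card_le_of_deficient visX defX.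
rewrite -(card_imset X (@mirror_inj d)).
exact: card_le_of_deficient (mutual_visibility_mirror visX) defM.
Qed.
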